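(* Let $F$ be any subfield of $\mathbb{R}$ and $\varepsilon\in F$. Then $T[F]$ proves $\forall x\,(x^2-2x+1\ge\varepsilon)$ if and only if $\varepsilon<0$. In particular, $T[F]$ does not prove $\forall x\,(x^2-2x+1\ge0)$.
   Context: For $a\in F$, $f_a$ is a unary function symbol interpreted as $f_a(x)=ax$; a constant $c\in F$ is denoted by the term $f_c(1)$. $x^2$ denotes $x\times x$ and $2x$ denotes $f_2(x)$. $T_{\mathrm{add}}[F]$ is the set of sentences true in $(\mathbb{R},0,1,+,-,<,(f_a)_{a\in F})$, $T_{\mathrm{mult}}[F]$ the set of sentences true in $(\mathbb{R},0,1,\times,\div,<,(f_a)_{a\in F})$ with $x\div0=0$, and $T[F]=T_{\mathrm{add}}[F]\cup T_{\mathrm{mult}}[F]$, a theory in the union of the two languages. *)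

From Stdlib Require Import Reals.
Open Scope R_scope.

Definition is_subfield (F : R -> Prop) : Prop :=
  F 0 /\ F 1 /\
  (forall x y, F x -> F y -> F (x + y)) /\
  (forall x, F x -> F (- x)) /\
  (forall x y, F x -> F y -> F (x * y)) /\
  (forall x, F x -> x <> 0 -> F (/ x)).

(* Terms of the union language (variables indexed by nat).
   [Fa a t] is the unary symbol f_a applied to t. *)
Inductive term : Type :=
| Var : nat -> term
| Zero : term
| One : term
| Add : term -> term -> term
| Sub : term -> term -> term
| Mul : term -> term -> term
| Div : term -> term -> term
| Fa : R -> term -> term.

Inductive formula : Type :=
| Fal : formula
| Eqf : term -> term -> formula
| Ltf : term -> term -> formula
| Neg : formula -> formula
| And : formula -> formula -> formula
| Or : formula -> formula -> formula
| Imp : formula -> formula -> formula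
| All : nat -> formula -> formula
| Ex : nat -> formula -> formula.

Fixpoint term_add (F : R -> Prop) (t : term) : Prop :=
  match t with
  | Var _ | Zero | One => True
  | Add u w | Sub u w => term_add F u /\ term_add F w
  | Mul _ _ | Div _ _ => False
  | Fa a u => F a /\ term_add F u
  end.

Fixpoint term_mult (F : R -> Prop) (t : term) : Prop :=
  match t with
  | Var _ | Zero | One => True
  | Mul u w | Div u w => term_mult F u /\ term_mult F w
  | Add _ _ | Sub _ _ => False
  | Fa a u => F a /\ term_mult F u
  end.

Fixpoint formula_in (tin : term -> Prop) (p : formula) : Prop :=
  match p with
  | Fal => True
  | Eqf u w | Ltf u w => tin u /\ tin w
  | Neg q | All _ q | Ex _ q => formula_in tin q
  | And q r | Or q r | Imp q r => formula_in tin q /\ formula_in tin r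
  end.

Fixpoint tfree (n : nat) (t : term) : Prop :=
  match t with
  | Var m => m = n
  | Zero | One => False
  | Add u w | Sub u w | Mul u w | Div u w => tfree n u \/ tfree n w
  | Fa _ u => tfree n u
  end.

Fixpoint ffree (n : nat) (p : formula) : Prop :=
  match p with
  | Fal => False
  | Eqf u w | Ltf u w => tfree n u \/ tfree n w
  | Neg q => ffree n q
  | And q r | Or q r | Imp q r => ffree n q \/ ffree n r
  | All m q | Ex m q => m <> n /\ ffree n q
  end.

Definition sentence (p : formula) : Prop := forall n, ~ ffree n p.

Record structure : Type := Structure {
  dom : Type;
  s0 : dom;
  s1 : dom;
  sadd : dom -> dom -> dom;
  ssub : dom -> dom -> dom;
  smul : dom -> dom -> dom;
  sdiv : dom -> dom -> dom;
  slt : dom -> dom -> Prop;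
  sf : R -> dom -> dom }.

Definition upd {D : Type} (v : nat -> D) (n : nat) (d : D) : nat -> D :=
  fun m => if Nat.eqb m n then d else v m.

Fixpoint teval (M : structure) (v : nat -> dom M) (t : term) : dom M :=
  match t with
  | Var n => v n
  | Zero => s0 M
  | One => s1 M
  | Add u w => sadd M (teval M v u) (teval M v w)
  | Sub u w => ssub M (teval M v u) (teval M v w)
  | Mul u w => smul M (teval M v u) (teval M v w)
  | Div u w => sdiv M (teval M v u) (teval M v w)
  | Fa a u => sf M a (teval M v u)
  end.

Fixpoint sat (M : structure) (v : nat -> dom M) (p : formula) : Prop :=
  match p with
  | Fal => False
  | Eqf u w => teval M v u = teval M v w
  | Ltf u w => slt M (teval M v u) (teval M v w)
  | Neg q => ~ sat M v q
  | And q r => sat M v q /\ sat M v r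
  | Or q r => sat M v q \/ sat M v r
  | Imp q r => sat M v q -> sat M v r
  | All n q => forall d : dom M, sat M (upd v n d) q
  | Ex n q => exists d : dom M, sat M (upd v n d) q
  end.

(* Division with the convention x / 0 = 0. *)
Definition rdiv0 (x y : R) : R :=
  if Req_EM_T y 0 then 0 else x / y.

(* The real field, expanding both (R,0,1,+,-,<,f_a) and (R,0,1,*,/,<,f_a). *)
Definition Rstruct : structure :=
  Structure R 0 1 Rplus Rminus Rmult rdiv0 Rlt (fun a x => a * x).

Definition true_in_R (p : formula) : Prop := forall v, sat Rstruct v p.

Definition in_T (F : R -> Prop) (p : formula) : Prop :=
  sentence p /\ true_in_R p /\
  (formula_in (term_add F) p \/ formula_in (term_mult F) p).

(* T[F] proves p, via the completeness theorem: p holds in every model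
   of T[F] (structures of the union language). *)
Definition proves (F : R -> Prop) (p : formula) : Prop :=
  forall M : structure,
    (forall q, in_T F q -> forall v, sat M v q) ->
    forall v, sat M v p.

(* The sentence  ∀x (x^2 - 2x + 1 >= eps), with x = variable 0,
   x^2 = x*x, 2x = f_2(x), eps = f_eps(1), and a >= b := b < a \/ b = a. *)
Definition poly_term : term :=
  Add (Sub (Mul (Var 0) (Var 0)) (Fa 2 (Var 0))) One.

Definition target (eps : R) : formula :=
  All 0 (Or (Ltf (Fa eps One) poly_term) (Eqf (Fa eps One) poly_term)).

(* If eps < 0, finitely many axioms of T[F] already force x * x - 2x + 1 >= eps.  Let h = -eps/2
   and a = k h with k in N.  The multiplicative axioms give x * x >= 0, and x * x >= a x when
   x >= a; the additive axioms say that y - 2x + 1 >= eps whenever x < 0 and y >= 0, or whenever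
   a <= x < a + h and y >= a x, or whenever x >= a >= 2 and y >= a x.  Cutting the line at
   0, h, 2h, ..., N h >= 2 covers every element of any model.

   If eps >= 0, we build a model of T[F] where the inequality fails.  By Los's theorem the
   ultrapower *R of R over a nonprincipal ultrafilter on N satisfies T[F]; let delta be the
   infinitesimal [1/(n+1)].  The map Stretch which, in the monad of each nonzero standard s,
   doubles distances beyond s(1 + delta) (seen from 0) is an order automorphism of *R fixing 0
   and 1 and commuting with every f_a, but it is not additive.  Keeping + and - and transporting
   * and / along Stretch gives a structure whose additive reduct is *R and whose multiplicative
   reduct is isomorphic to that of *R, hence a model of T[F].  At x = 1 + delta we have
   Stretch x = x, while the inverse of Stretch halves the excess of x^2 over 1 + delta, so the
   twisted square of x is 1 + delta + (delta + delta^2)/2 and x * x - 2x + 1 = (delta^2 - delta)/2,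
   which is negative. *)

From Stdlib Require Import Reals.
Open Scope R_scope.
From Stdlib Require Import Lra Lia.
From Stdlib Require Import Classical ClassicalEpsilon ProofIrrelevance.
From Stdlib Require Import FunctionalExtensionality PropExtensionality.
From mathcomp Require ssreflect ssrbool ssrnat classical_sets filter.

Lemma subfield_INR F : is_subfield F -> forall k, F (INR k).
Proof.
  intros (F0 & F1 & Fadd & _) k. induction k as [|k IH]; [exact F0|].
  rewrite S_INR. auto.
Qed.

Lemma subfield_two F : is_subfield F -> F 2.
Proof. intros HF. exact (subfield_INR F HF 2). Qed.

Lemma subfield_half_opp F eps : is_subfield F -> F eps -> F (- eps / 2).
Proof.
  intros HF Feps. pose proof (subfield_two F HF) as F2.
  destruct HF as (_ & _ & _ & Fopp & Fmul & Finv).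
  apply Fmul; [apply Fopp, Feps | apply Finv; [exact F2 | lra]].
Qed.

Lemma top_bound eps a x y : eps < 0 -> 2 <= a -> a <= x -> a * x <= y -> eps < y - 2 * x + 1.
Proof. intros. nra. Qed.

Lemma slab_bound eps a x y : eps < 0 -> 0 <= a -> a <= x < a + - eps / 2 -> a * x <= y ->
  eps < y - 2 * x + 1.
Proof.
  intros eps_neg a_nonneg [a_le_x x_lt] y_ge. destruct (Rle_dec 2 a) as [a_large | a_small].
  - apply (top_bound eps a); assumption.
  - assert ((a - 2) * (a + - eps / 2) < (a - 2) * x) by (apply Rmult_lt_gt_compat_neg_l; lra).
    pose proof (Rle_0_sqr (a - 1)) as sq_nonneg. unfold Rsqr in sq_nonneg.
    assert (0 <= a * - eps) by (apply Rmult_le_pos; lra).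
    nra.
Qed.

Definition geq (u w : term) : formula := Or (Ltf w u) (Eqf w u).

Definition sge (M : structure) (x y : dom M) : Prop := slt M y x \/ y = x.

Definition xv : term := Var 0.
Definition yv : term := Var 1.
Definition scalar (a : R) : term := Fa a One.
Definition lin_term : term := Add (Sub yv (Fa 2 xv)) One.

Definition ax_trichotomy : formula :=
  All 0 (All 1 (Or (Ltf xv yv) (Or (Eqf xv yv) (Ltf yv xv)))).
(* Constants, 0 included, are written f_c(1) so that they match the grid points f_(k h)(1). *)
Definition ax_square_nonneg : formula := All 0 (geq (Mul xv xv) (scalar 0)).
Definition ax_square_ge (a : R) : formula :=
  All 0 (Imp (geq xv (scalar a)) (geq (Mul xv xv) (Fa a xv))).
Definition ax_lin_neg (eps : R) : formula :=
  All 0 (All 1 (Imp (Ltf xv (scalar 0)) (Imp (geq yv (scalar 0)) (geq lin_term (scalar eps))))).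
Definition ax_lin_slab (eps a b : R) : formula :=
  All 0 (All 1 (Imp (geq xv (scalar a)) (Imp (Ltf xv (scalar b))
    (Imp (geq yv (Fa a xv)) (geq lin_term (scalar eps)))))).
Definition ax_lin_top (eps a : R) : formula :=
  All 0 (All 1 (Imp (geq xv (scalar a)) (Imp (geq yv (Fa a xv)) (geq lin_term (scalar eps))))).

Ltac prove_sentence := let n := fresh "n" in intros n ?; simpl in *; lia.
Ltac unfold_sat := intros v; simpl; unfold upd; simpl.

Section Provable.
Variables (F : R -> Prop) (eps : R).
Hypotheses (HF : is_subfield F) (Feps : F eps) (eps_neg : eps < 0).
Variable M : structure.
Hypothesis HM : forall q, in_T F q -> forall v, sat M v q.

Let F0 : F 0 := proj1 HF.
Let F2 : F 2 := subfield_two F HF.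
Let h : R := - eps / 2.
Let Fh : F h := subfield_half_opp F eps HF Feps.
Let cst (a : R) : dom M := sf M a (s1 M).
Let lin (x y : dom M) : dom M := sadd M (ssub M y (sf M 2 x)) (s1 M).

Lemma model_sat_axiom q v : sentence q -> true_in_R q ->
  formula_in (term_add F) q \/ formula_in (term_mult F) q -> sat M v q.
Proof. intros. apply HM; repeat split; assumption. Qed.

Lemma model_trichotomy x y : slt M x y \/ x = y \/ slt M y x.
Proof.
  refine (model_sat_axiom ax_trichotomy (fun _ => x) _ _ _ x y).
  - prove_sentence.
  - unfold_sat. intros s t. destruct (total_order_T s t) as [[|]|]; auto.
  - left. simpl. tauto.
Qed.

Lemma model_lt_or_ge x y : slt M x y \/ sge M x y.
Proof. unfold sge. destruct (model_trichotomy x y) as [| [-> |]]; auto. Qed.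

Lemma model_square_nonneg x : sge M (smul M x x) (cst 0).
Proof.
  refine (model_sat_axiom ax_square_nonneg (fun _ => x) _ _ _ x).
  - prove_sentence.
  - unfold_sat. intros s. destruct (Req_dec s 0) as [-> | Hs]; [right; ring | left; nra].
  - right. simpl. tauto.
Qed.

Lemma model_square_ge a x : F a -> 0 <= a -> sge M x (cst a) -> sge M (smul M x x) (sf M a x).
Proof.
  intros Fa a_nonneg.
  refine (model_sat_axiom (ax_square_ge a) (fun _ => x) _ _ _ x).
  - prove_sentence.
  - unfold_sat. intros s [Hs | <-]; [left; nra | right; ring].
  - right. simpl. tauto.
Qed.

Lemma model_lin_neg x y : slt M x (cst 0) -> sge M y (cst 0) -> sge M (lin x y) (cst eps).
Proof.
  refine (model_sat_axiom (ax_lin_neg eps) (fun _ => x) _ _ _ x y).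
  - prove_sentence.
  - unfold_sat. intros s t Hs [Ht | Ht]; left; lra.
  - left. simpl. tauto.
Qed.

Lemma model_lin_slab a x y : F a -> 0 <= a ->
  sge M x (cst a) -> slt M x (cst (a + h)) -> sge M y (sf M a x) -> sge M (lin x y) (cst eps).
Proof.
  intros Fa a_nonneg.
  assert (Fb : F (a + h)) by (pose proof HF as (_ & _ & Fadd & _); auto).
  refine (model_sat_axiom (ax_lin_slab eps a (a + h)) (fun _ => x) _ _ _ x y).
  - prove_sentence.
  - unfold_sat. intros s t Hs Hsb Ht. rewrite ?Rmult_1_r in *.
    left. apply (slab_bound eps a s t); [auto | auto | split | ]; unfold h in *; lra.
  - left. simpl. tauto.
Qed.

Lemma model_lin_top a x y : F a -> 2 <= a ->
  sge M x (cst a) -> sge M y (sf M a x) -> sge M (lin x y) (cst eps).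
Proof.
  intros Fa a_large.
  refine (model_sat_axiom (ax_lin_top eps a) (fun _ => x) _ _ _ x y).
  - prove_sentence.
  - unfold_sat. intros s t Hs Ht. rewrite ?Rmult_1_r in *.
    left. apply (top_bound eps a s t); lra.
  - left. simpl. tauto.
Qed.

Lemma F_grid k : F (INR k * h).
Proof. pose proof HF as (_ & _ & _ & _ & Fmul & _). apply Fmul, Fh. apply subfield_INR, HF. Qed.

Lemma grid_nonneg k : 0 <= INR k * h.
Proof. apply Rmult_le_pos; [apply pos_INR | unfold h; lra]. Qed.

Lemma model_below_grid k x : slt M x (cst (INR k * h)) -> sge M (lin x (smul M x x)) (cst eps).
Proof.
  revert x. induction k as [|k IH]; intros x Hx.
  - rewrite Rmult_0_l in Hx. apply model_lin_neg; auto using model_square_nonneg.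
  - destruct (model_lt_or_ge x (cst (INR k * h))) as [Hlt | Hge]; auto.
    apply (model_lin_slab (INR k * h)); auto using F_grid, grid_nonneg, model_square_ge.
    rewrite S_INR, Rmult_plus_distr_r, Rmult_1_l in Hx. exact Hx.
Qed.

Lemma model_target x : sge M (lin x (smul M x x)) (cst eps).
Proof.
  assert (h_pos : 0 < h) by (unfold h; lra).
  destruct (INR_archimed h 2 h_pos) as [N HN].
  destruct (model_lt_or_ge x (cst (INR N * h))) as [Hlt | Hge].
  - exact (model_below_grid N x Hlt).
  - apply (model_lin_top (INR N * h)); auto using F_grid; try lra.
    apply model_square_ge; auto using F_grid, grid_nonneg.
Qed.

End Provable.

Lemma proves_target_neg F eps : is_subfield F -> F eps -> eps < 0 -> proves F (target eps).
Proof. intros HF Feps eps_neg M HM v x. exact (model_target F eps HF Feps eps_neg M HM x). Qed.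

Lemma sat_transport (M1 M2 : structure) (h : dom M1 -> dom M2) (tin : term -> Prop) :
  (forall x y, h x = h y -> x = y) -> (forall y, exists x, h x = y) ->
  (forall x y, slt M1 x y <-> slt M2 (h x) (h y)) ->
  (forall v t, tin t -> teval M2 (fun k => h (v k)) t = h (teval M1 v t)) ->
  forall p v, formula_in tin p -> (sat M1 v p <-> sat M2 (fun k => h (v k)) p).
Proof.
  intros h_inj h_surj h_lt h_teval.
  assert (h_upd : forall v n d, (fun k => h (upd v n d k)) = upd (fun k => h (v k)) n (h d)).
  { intros. apply functional_extensionality. intros k. unfold upd. destruct (Nat.eqb k n); auto. }
  induction p as [| u w | u w | p IH | p IH q IHq | p IH q IHq | p IH q IHq | m p IH | m p IH];
    intros v Hp; simpl in *.
  - tauto.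
  - rewrite !h_teval by tauto. split; [congruence | apply h_inj].
  - rewrite !h_teval by tauto. apply h_lt.
  - rewrite IH by auto. tauto.
  - rewrite IH, IHq by tauto. tauto.
  - rewrite IH, IHq by tauto. tauto.
  - rewrite IH, IHq by tauto. tauto.
  - split.
    + intros H d. destruct (h_surj d) as [d' <-]. rewrite <- h_upd, <- IH; auto.
    + intros H d. rewrite IH, h_upd; auto.
  - split.
    + intros [d H]. exists (h d). rewrite <- h_upd, <- IH; auto.
    + intros [d H]. destruct (h_surj d) as [d' <-]. exists d'. rewrite IH, h_upd; auto.
Qed.

Record is_ultrafilter (U : (nat -> Prop) -> Prop) : Prop := {
  uf_full : U (fun _ => True);
  uf_proper : ~ U (fun _ => False);
  uf_and : forall A B, U A -> U B -> U (fun n => A n /\ B n);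
  uf_mono : forall A B : nat -> Prop, (forall n, A n -> B n) -> U A -> U B;
  uf_em : forall A, U A \/ U (fun n => ~ A n);
  uf_tail : forall k, U (fun n => (k <= n)%nat) }.

Module NatUltrafilter.
Import ssreflect ssrbool ssrnat classical_sets filter.

Lemma exists_nonprincipal : exists U, is_ultrafilter U.
Proof.
  have [G [GU sub]] := ultraFilterLemma
    (eventually_filter : ProperFilter (eventually : set_system nat)).
  have GF : ProperFilter G by exact: ultra_proper.
  exists G; split.
  - exact: filterT.
  - by move=> H; have := filter_ex H; case.
  - by move=> A B HA HB; exact: (filterI HA HB).
  - by move=> A B AB HA; exact: (filterS AB HA).
  - by move=> A; exact: in_ultra_setVsetC.
  - by move=> k; apply: sub; exists k => // n /= /leP.
Qed.

End NatUltrafilter.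

Definition excess (s t d : R) : R :=
  if Rlt_dec 0 s then Rmax 0 (t - s * (1 + d))
  else if Rlt_dec s 0 then Rmin 0 (t - s * (1 + d)) else 0.

(* [stretch s _ d] fixes the side of [s * (1 + d)] containing 0 and doubles distances to
   [s * (1 + d)] on the other side; [shrink s _ d] is its inverse. *)
Definition stretch (s t d : R) : R := t + excess s t d.
Definition shrink (s t d : R) : R := t - excess s t d / 2.

Ltac excess_cases :=
  unfold stretch, shrink, excess, Rmax, Rmin, Rabs in *;
  repeat match goal with
  | |- context [Rlt_dec ?a ?b] => destruct (Rlt_dec a b)
  | |- context [Rle_dec ?a ?b] => destruct (Rle_dec a b)
  | |- context [Rcase_abs ?a] => destruct (Rcase_abs a)
  end.

Lemma excess_zero t d : excess 0 t d = 0.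
Proof. excess_cases; lra. Qed.

Lemma excess_scale a s t d : excess (a * s) (a * t) d = a * excess s t d.
Proof.
  destruct (Rtotal_order a 0) as [Ha | [-> | Ha]].
  - excess_cases; nra.
  - rewrite !Rmult_0_l, excess_zero; ring.
  - excess_cases; nra.
Qed.

Lemma excess_close s t d : 0 <= d -> Rabs (excess s t d) <= Rabs (t - s).
Proof. intros. excess_cases; nra. Qed.

Lemma excess_inner s t d : (0 < s -> t <= s * (1 + d)) -> (s < 0 -> s * (1 + d) <= t) ->
  excess s t d = 0.
Proof. intros. excess_cases; lra. Qed.

Lemma stretch_zero t d : stretch 0 t d = t.
Proof. unfold stretch. rewrite excess_zero. ring. Qed.

Lemma shrink_zero t d : shrink 0 t d = t.
Proof. unfold shrink. rewrite excess_zero. field. Qed.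

Lemma stretch_close s t d : 0 < d -> Rabs (stretch s t d - t) <= Rabs (t - s).
Proof.
  intros. unfold stretch. replace (t + excess s t d - t) with (excess s t d) by ring.
  apply excess_close. lra.
Qed.

Lemma shrink_close s t d : 0 < d -> Rabs (shrink s t d - t) <= Rabs (t - s).
Proof.
  intros. unfold shrink. replace (t - excess s t d / 2 - t) with (- excess s t d / 2) by field.
  pose proof (excess_close s t d). unfold Rabs in *. repeat destruct Rcase_abs; lra.
Qed.

Lemma stretch_away s t d : 0 <= d ->
  (s <= t -> t <= stretch s t d) /\ (t <= s -> stretch s t d <= t).
Proof. intros. split; intros; excess_cases; nra. Qed.

Lemma stretch_increasing s t u d : t < u -> stretch s t d < stretch s u d.
Proof. intros. excess_cases; nra. Qed.

Lemma stretch_shrink s t d : stretch s (shrink s t d) d = t.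
Proof. excess_cases; nra. Qed.

Lemma shrink_square_below d : 0 < d < 1 ->
  shrink 1 ((1 + d) * (1 + d)) d - 2 * (1 + d) + 1 < 0.
Proof. intros. excess_cases; nra. Qed.

Section Ultrapower.
Variable U : (nat -> Prop) -> Prop.
Hypothesis HU : is_ultrafilter U.

Lemma U_all (A : nat -> Prop) : (forall n, A n) -> U A.
Proof. intros H. apply (uf_mono U HU (fun _ => True)); auto. apply uf_full, HU. Qed.

Lemma U_mp (A B : nat -> Prop) : U A -> (forall n, A n -> B n) -> U B.
Proof. intros HA H. exact (uf_mono U HU A B H HA). Qed.

Lemma U_mp2 (A B C : nat -> Prop) : U A -> U B -> (forall n, A n -> B n -> C n) -> U C.
Proof. intros HA HB H. apply (U_mp _ _ (uf_and U HU A B HA HB)). intros n []; auto. Qed.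

Lemma U_mp3 (A B C E : nat -> Prop) :
  U A -> U B -> U C -> (forall n, A n -> B n -> C n -> E n) -> U E.
Proof. intros HA HB HC H. apply (U_mp2 _ _ _ (uf_and U HU A B HA HB) HC). intros n []; auto. Qed.

Lemma U_contra (A : nat -> Prop) : U A -> (forall n, ~ A n) -> False.
Proof. intros HA H. apply (uf_proper U HU). exact (U_mp A _ HA H). Qed.

Lemma U_not (A : nat -> Prop) : U (fun n => ~ A n) <-> ~ U A.
Proof.
  split.
  - intros Hn HA. apply (U_contra _ (uf_and U HU _ _ HA Hn)). intros n []; auto.
  - intros H. destruct (uf_em U HU A); tauto.
Qed.

Lemma U_or (A B : nat -> Prop) : U (fun n => A n \/ B n) -> U A \/ U B.
Proof.
  intros H. destruct (uf_em U HU A) as [|HA]; auto.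
  right. apply (U_mp2 _ _ _ H HA). intros n [] ?; tauto.
Qed.

Definition eqU (f g : nat -> R) : Prop := U (fun n => f n = g n).

Lemma eqU_refl f : eqU f f.
Proof. apply U_all. reflexivity. Qed.

Lemma eqU_sym f g : eqU f g -> eqU g f.
Proof. intros H. apply (U_mp _ _ H). auto. Qed.

Lemma eqU_trans f g k : eqU f g -> eqU g k -> eqU f k.
Proof. intros H1 H2. apply (U_mp2 _ _ _ H1 H2). congruence. Qed.

Definition rep (f : nat -> R) : nat -> R := epsilon (inhabits f) (eqU f).

Lemma eqU_rep f : eqU f (rep f).
Proof. apply (epsilon_spec (inhabits f) (eqU f)). exists f. apply eqU_refl. Qed.

Lemma rep_eqU f g : eqU f g -> rep f = rep g.
Proof.
  intros H. unfold rep. replace (inhabits f) with (inhabits g) by apply proof_irrelevance.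
  f_equal. apply functional_extensionality. intros k.
  apply propositional_extensionality. split; eauto using eqU_trans, eqU_sym.
Qed.

Definition hyperreal : Type := {f : nat -> R | rep f = f}.

Definition val (x : hyperreal) : nat -> R := proj1_sig x.

Definition cl (f : nat -> R) : hyperreal :=
  exist _ (rep f) (rep_eqU _ _ (eqU_sym _ _ (eqU_rep f))).

Lemma val_inj (x y : hyperreal) : val x = val y -> x = y.
Proof.
  destruct x as [f Hf], y as [g Hg]. simpl. intros ->. f_equal. apply proof_irrelevance.
Qed.

Lemma cl_val x : cl (val x) = x.
Proof. apply val_inj. destruct x as [f Hf]. exact Hf. Qed.

Lemma val_cl f : eqU (val (cl f)) f.
Proof. apply eqU_sym, eqU_rep. Qed.

Lemma cl_eq f g : cl f = cl g <-> eqU f g.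
Proof.
  split.
  - intros H. apply (eqU_trans _ (rep f)); [apply eqU_rep |].
    change (eqU (val (cl f)) g). rewrite H. apply val_cl.
  - intros H. apply val_inj. apply rep_eqU, H.
Qed.

Lemma cl_ext f g : (forall n, f n = g n) -> cl f = cl g.
Proof. intros H. apply cl_eq, U_all, H. Qed.

Definition embed (r : R) : hyperreal := cl (fun _ => r).
Definition op2 (o : R -> R -> R) (x y : hyperreal) : hyperreal :=
  cl (fun n => o (val x n) (val y n)).
Definition scale (a : R) (x : hyperreal) : hyperreal := cl (fun n => a * val x n).
Definition ltH (x y : hyperreal) : Prop := U (fun n => val x n < val y n).

Lemma op2_cl o f g : op2 o (cl f) (cl g) = cl (fun n => o (f n) (g n)).
Proof. apply cl_eq. apply (U_mp2 _ _ _ (val_cl f) (val_cl g)). intros n -> ->. reflexivity. Qed.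

Lemma scale_cl a f : scale a (cl f) = cl (fun n => a * f n).
Proof. apply cl_eq. apply (U_mp _ _ (val_cl f)). intros n ->. reflexivity. Qed.

Lemma ltH_cl f g : ltH (cl f) (cl g) <-> U (fun n => f n < g n).
Proof.
  split; intros H; apply (U_mp3 _ _ _ _ H (val_cl f) (val_cl g)); intros n; lra.
Qed.

Lemma ltH_irrefl x : ~ ltH x x.
Proof. intros H. apply (U_contra _ H). intros n. lra. Qed.

Lemma ltH_trans x y z : ltH x y -> ltH y z -> ltH x z.
Proof. intros H1 H2. apply (U_mp2 _ _ _ H1 H2). intros n. lra. Qed.

Lemma ltH_total x y : ltH x y \/ x = y \/ ltH y x.
Proof.
  destruct (uf_em U HU (fun n => val x n < val y n)) as [| Hnlt]; auto.
  destruct (uf_em U HU (fun n => val x n = val y n)) as [Heq | Hneq].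
  - right; left. rewrite <- (cl_val x), <- (cl_val y). apply cl_eq, Heq.
  - right; right. apply (U_mp2 _ _ _ Hnlt Hneq). intros n. lra.
Qed.

Definition ultrapower : structure :=
  Structure hyperreal (embed 0) (embed 1) (op2 Rplus) (op2 Rminus) (op2 Rmult) (op2 rdiv0)
    ltH scale.

Definition coord (v : nat -> hyperreal) (n : nat) : nat -> R := fun k => val (v k) n.

Lemma coord_upd v m d n : coord (upd v m d) n = upd (coord v n) m (val d n).
Proof.
  apply functional_extensionality. intros k. unfold coord, upd. destruct (Nat.eqb k m); auto.
Qed.

Lemma teval_ultrapower v t : teval ultrapower v t = cl (fun n => teval Rstruct (coord v n) t).
Proof.
  induction t; simpl; rewrite ?IHt1, ?IHt2, ?IHt, ?op2_cl, ?scale_cl; try reflexivity.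
  symmetry. apply cl_val.
Qed.

Lemma sat_ultrapower p : forall v, sat ultrapower v p <-> U (fun n => sat Rstruct (coord v n) p).
Proof.
  induction p as [| u w | u w | p IH | p IH q IHq | p IH q IHq | p IH q IHq | m p IH | m p IH];
    intros v; simpl.
  - split; [tauto | intros H; exact (uf_proper U HU H)].
  - rewrite !teval_ultrapower. apply cl_eq.
  - rewrite !teval_ultrapower. apply ltH_cl.
  - rewrite IH, U_not. tauto.
  - rewrite IH, IHq. split.
    + intros []. apply uf_and; auto.
    + intros H. split; apply (U_mp _ _ H); tauto.
  - rewrite IH, IHq. split.
    + intros [H | H]; apply (U_mp _ _ H); tauto.
    + apply U_or.
  - rewrite IH, IHq. split.
    + intros H. destruct (uf_em U HU (fun n => sat Rstruct (coord v n) p)) as [Hp | Hp].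
      * apply (U_mp _ _ (H Hp)). tauto.
      * apply (U_mp _ _ Hp). tauto.
    + intros H Hp. apply (U_mp2 _ _ _ H Hp). tauto.
  - split.
    + intros H. destruct (uf_em U HU (fun n => forall r, sat Rstruct (upd (coord v n) m r) p))
        as [Hall | Hnot]; auto. exfalso.
      set (P n r := ~ sat Rstruct (upd (coord v n) m r) p).
      set (g n := epsilon (inhabits 0) (P n)).
      specialize (H (cl g)). rewrite IH in H.
      apply (U_contra _ (uf_and U HU _ _ H (uf_and U HU _ _ Hnot (val_cl g)))).
      intros n (Hg & Hn & Hval). rewrite coord_upd, Hval in Hg.
      apply not_all_ex_not in Hn. exact (epsilon_spec (inhabits 0) (P n) Hn Hg).
    + intros H d. rewrite IH. apply (U_mp _ _ H). intros n Hn. rewrite coord_upd. apply Hn.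
  - split.
    + intros [d Hd]. rewrite IH in Hd. apply (U_mp _ _ Hd). intros n Hn.
      rewrite coord_upd in Hn. eauto.
    + intros H. set (P n r := sat Rstruct (upd (coord v n) m r) p).
      set (g n := epsilon (inhabits 0) (P n)).
      exists (cl g). rewrite IH. apply (U_mp2 _ _ _ H (val_cl g)). intros n Hn Hval.
      rewrite coord_upd, Hval. exact (epsilon_spec (inhabits 0) (P n) Hn).
Qed.

Lemma ultrapower_true p v : true_in_R p -> sat ultrapower v p.
Proof. intros H. apply sat_ultrapower, U_all. intros n. apply H. Qed.

Definition delta (n : nat) : R := / INR (S n).

Lemma delta_pos n : 0 < delta n.
Proof. apply Rinv_0_lt_compat, lt_0_INR. lia. Qed.

Lemma delta_lt_one n : (1 <= n)%nat -> delta n < 1.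
Proof.
  intros Hn. unfold delta. rewrite <- Rinv_1. apply Rinv_lt_contravar.
  - rewrite Rmult_1_l. apply lt_0_INR. lia.
  - apply lt_1_INR. lia.
Qed.

Lemma U_delta_lt e : 0 < e -> U (fun n => delta n < e).
Proof.
  intros He. destruct (archimed_cor1 e He) as [N [HN N_pos]].
  apply (U_mp _ _ (uf_tail U HU N)). intros n Hn. unfold delta.
  apply (Rle_lt_trans _ (/ INR N)); auto.
  apply Rinv_le_contravar; [apply lt_0_INR; lia | apply le_INR; lia].
Qed.

Definition ulim (f : nat -> R) (s : R) : Prop :=
  forall e, 0 < e -> U (fun n => s - e < f n < s + e).

Lemma ulim_const r : ulim (fun _ => r) r.
Proof. intros e He. apply U_all. intros. lra. Qed.

Lemma ulim_eqU f g s : eqU f g -> ulim f s -> ulim g s.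
Proof. intros Efg Hf e He. apply (U_mp2 _ _ _ (Hf e He) Efg). intros n ? <-. auto. Qed.

Lemma ulim_unique f s s' : ulim f s -> ulim f s' -> s = s'.
Proof.
  intros Hs Hs'. destruct (Req_dec s s') as [|Hne]; auto. exfalso.
  set (e := Rabs (s - s') / 2).
  assert (He : 0 < e) by (unfold e; assert (0 < Rabs (s - s')) by (apply Rabs_pos_lt; lra); lra).
  apply (U_contra _ (uf_and U HU _ _ (Hs e He) (Hs' e He))). intros n [].
  unfold e, Rabs in *. destruct Rcase_abs; lra.
Qed.

Lemma ulim_scale a f s : ulim f s -> ulim (fun n => a * f n) (a * s).
Proof.
  intros Hf e He. destruct (Req_dec a 0) as [-> | Ha].
  { apply U_all. intros. lra. }
  assert (Habs : 0 < Rabs a) by (apply Rabs_pos_lt, Ha).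
  apply (U_mp _ _ (Hf (e / Rabs a) (Rdiv_lt_0_compat _ _ He Habs))). intros n Hn.
  assert (Hd : Rabs (f n - s) < e / Rabs a) by (apply Rabs_def1; lra).
  assert (Hae : Rabs (a * f n - a * s) < e).
  { rewrite <- Rmult_minus_distr_l, Rabs_mult.
    apply (Rmult_lt_compat_l (Rabs a)) in Hd; auto.
    replace (Rabs a * (e / Rabs a)) with e in Hd by (field; lra). exact Hd. }
  apply Rabs_def2 in Hae. lra.
Qed.

Lemma ulim_one_plus_delta : ulim (fun n => 1 + delta n) 1.
Proof.
  intros e He. apply (U_mp _ _ (U_delta_lt e He)). intros n Hn. pose proof (delta_pos n). lra.
Qed.

Lemma ulim_square_one_plus_delta : ulim (fun n => (1 + delta n) * (1 + delta n)) 1.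
Proof.
  intros e He. apply (U_mp2 _ _ _ (U_delta_lt (e / 3) ltac:(lra)) (U_delta_lt 1 ltac:(lra))).
  intros n Hn H1. pose proof (delta_pos n). split; nra.
Qed.

(* Standard part, with junk value 0 on infinite elements, so that [perturb] below fixes them. *)
Definition st (x : hyperreal) : R :=
  match excluded_middle_informative (exists s, ulim (val x) s) with
  | left H => proj1_sig (constructive_indefinite_description _ H)
  | right _ => 0
  end.

Lemma st_spec x s : ulim (val x) s -> st x = s.
Proof.
  intros Hs. unfold st. destruct excluded_middle_informative as [H | H].
  - destruct constructive_indefinite_description as [s' Hs']. exact (ulim_unique _ _ _ Hs' Hs).
  - exfalso. eauto.
Qed.

Lemma st_infinite x : ~ (exists s, ulim (val x) s) -> st x = 0.
Proof. intros Hn. unfold st. destruct excluded_middle_informative; tauto. Qed.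

Lemma st_embed r : st (embed r) = r.
Proof.
  apply st_spec. apply (ulim_eqU (fun _ => r)); [apply eqU_sym, val_cl | apply ulim_const].
Qed.

Lemma scale_zero x : scale 0 x = embed 0.
Proof. apply cl_ext. intros. ring. Qed.

Lemma st_scale a x : st (scale a x) = a * st x.
Proof.
  destruct (Req_dec a 0) as [-> | Ha].
  { rewrite scale_zero, st_embed. ring. }
  assert (E : forall b y, eqU (fun n => b * val y n) (val (scale b y)))
    by (intros; apply eqU_sym, val_cl).
  destruct (classic (exists s, ulim (val x) s)) as [[s Hs] | Hn].
  - rewrite (st_spec x s Hs). apply st_spec. apply (ulim_eqU _ _ _ (E a x)), ulim_scale, Hs.
  - rewrite (st_infinite x Hn), Rmult_0_r. apply st_infinite. intros [s Hs]. apply Hn.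
    exists (/ a * s). apply (ulim_eqU (fun n => / a * val (scale a x) n)); [| apply ulim_scale, Hs].
    apply (U_mp _ _ (val_cl (fun n => a * val x n))). intros n Hval.
    unfold scale. rewrite Hval. field. exact Ha.
Qed.

Section Perturbation.
Variable K : R -> R -> R -> R.
Hypothesis K_close : forall s t d, 0 < d -> Rabs (K s t d - t) <= Rabs (t - s).
Hypothesis K_zero : forall t d, K 0 t d = t.

Definition perturb (x : hyperreal) : hyperreal := cl (fun n => K (st x) (val x n) (delta n)).

Lemma perturb_cl f s : st (cl f) = s -> perturb (cl f) = cl (fun n => K s (f n) (delta n)).
Proof.
  intros Hs. unfold perturb. rewrite Hs.
  apply cl_eq, (U_mp _ _ (val_cl f)). intros n ->. reflexivity.
Qed.

Lemma perturb_ulim x s : ulim (val x) s -> ulim (val (perturb x)) s.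
Proof.
  intros Hx. unfold perturb. rewrite (st_spec x s Hx).
  apply (ulim_eqU _ _ _ (eqU_sym _ _ (val_cl _))). intros e He.
  apply (U_mp _ _ (Hx (e / 2) ltac:(lra))). intros n Hn.
  pose proof (K_close s (val x n) (delta n) (delta_pos n)).
  unfold Rabs in *. repeat destruct Rcase_abs; lra.
Qed.

Lemma perturb_infinite x : ~ (exists s, ulim (val x) s) -> perturb x = x.
Proof.
  intros Hn. unfold perturb. rewrite (st_infinite x Hn).
  transitivity (cl (val x)); [apply cl_ext; intros; apply K_zero | apply cl_val].
Qed.

Lemma st_perturb x : st (perturb x) = st x.
Proof.
  destruct (classic (exists s, ulim (val x) s)) as [[s Hs] | Hn].
  - rewrite (st_spec x s Hs). apply st_spec, perturb_ulim, Hs.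
  - rewrite perturb_infinite; auto.
Qed.

End Perturbation.

Definition Stretch : hyperreal -> hyperreal := perturb stretch.
Definition Shrink : hyperreal -> hyperreal := perturb shrink.

Lemma Stretch_Shrink y : Stretch (Shrink y) = y.
Proof.
  assert (Hst : st (Shrink y) = st y) by (apply st_perturb; auto using shrink_close, shrink_zero).
  unfold Stretch, perturb at 1. rewrite Hst.
  transitivity (cl (val y)); [| apply cl_val]. apply cl_eq.
  apply (U_mp _ _ (val_cl (fun n => shrink (st y) (val y n) (delta n)))). intros n Hn.
  unfold Shrink, perturb. rewrite Hn. apply stretch_shrink.
Qed.

Lemma Stretch_scale a x : Stretch (scale a x) = scale a (Stretch x).
Proof.
  unfold Stretch, perturb. rewrite st_scale, scale_cl. apply cl_eq.
  apply (U_mp _ _ (val_cl (fun n => a * val x n))). intros n Hn.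
  unfold scale. rewrite Hn. unfold stretch. rewrite excess_scale. ring.
Qed.

Lemma Stretch_embed r : Stretch (embed r) = embed r.
Proof.
  unfold Stretch, embed. rewrite (perturb_cl _ _ r (st_embed r)).
  apply cl_ext. intros n. pose proof (delta_pos n).
  unfold stretch. rewrite excess_inner; [ring | nra | nra].
Qed.

Lemma Stretch_above x r : U (fun n => r < val x n) -> U (fun n => r < val (Stretch x) n).
Proof.
  intros Hx. unfold Stretch. destruct (Rlt_le_dec r (st x)) as [Hlt | Hle].
  - destruct (classic (exists s, ulim (val x) s)) as [[s Hs] | Hn].
    + rewrite (st_spec x s Hs) in Hlt.
      apply (U_mp _ _ (perturb_ulim _ stretch_close _ _ Hs (s - r) ltac:(lra))). intros n; lra.
    + rewrite perturb_infinite; auto using stretch_zero.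
  - apply (U_mp2 _ _ _ Hx (val_cl (fun n => stretch (st x) (val x n) (delta n)))).
    intros n Hn Hval. unfold perturb. rewrite Hval.
    pose proof (stretch_away (st x) (val x n) (delta n) (Rlt_le _ _ (delta_pos n))). lra.
Qed.

Lemma Stretch_below x r : U (fun n => val x n < r) -> U (fun n => val (Stretch x) n < r).
Proof.
  intros Hx. unfold Stretch. destruct (Rlt_le_dec (st x) r) as [Hlt | Hle].
  - destruct (classic (exists s, ulim (val x) s)) as [[s Hs] | Hn].
    + rewrite (st_spec x s Hs) in Hlt.
      apply (U_mp _ _ (perturb_ulim _ stretch_close _ _ Hs (r - s) ltac:(lra))). intros n; lra.
    + rewrite perturb_infinite; auto using stretch_zero.
  - apply (U_mp2 _ _ _ Hx (val_cl (fun n => stretch (st x) (val x n) (delta n)))).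
    intros n Hn Hval. unfold perturb. rewrite Hval.
    pose proof (stretch_away (st x) (val x n) (delta n) (Rlt_le _ _ (delta_pos n))). lra.
Qed.

Definition separated (x y : hyperreal) : Prop :=
  exists r, U (fun n => val x n < r) /\ U (fun n => r < val y n).

Lemma ulim_not_separated x y : ltH x y -> ~ separated x y ->
  forall s, ulim (val x) s <-> ulim (val y) s.
Proof.
  intros Hxy Hsep s. split; intros Hs e He.
  - destruct (uf_em U HU (fun n => val y n < s + e)) as [Hy | Hy].
    + apply (U_mp3 _ _ _ _ (Hs e He) Hxy Hy). intros n. lra.
    + exfalso. apply Hsep. exists (s + e / 2). split.
      * apply (U_mp _ _ (Hs (e / 2) ltac:(lra))). intros n. lra.
      * apply (U_mp _ _ Hy). intros n. lra.
  - destruct (uf_em U HU (fun n => s - e < val x n)) as [Hx | Hx].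
    + apply (U_mp3 _ _ _ _ (Hs e He) Hxy Hx). intros n. lra.
    + exfalso. apply Hsep. exists (s - e / 2). split.
      * apply (U_mp _ _ Hx). intros n. lra.
      * apply (U_mp _ _ (Hs (e / 2) ltac:(lra))). intros n. lra.
Qed.

Lemma st_not_separated x y : ltH x y -> ~ separated x y -> st x = st y.
Proof.
  intros Hxy Hsep. pose proof (ulim_not_separated x y Hxy Hsep) as Hlim.
  destruct (classic (exists s, ulim (val x) s)) as [[s Hs] | Hn].
  - rewrite (st_spec x s Hs). symmetry. apply st_spec, Hlim, Hs.
  - rewrite (st_infinite x Hn), st_infinite; auto.
    intros [s Hs]. apply Hn. exists s. apply Hlim, Hs.
Qed.

Lemma Stretch_lt x y : ltH x y -> ltH (Stretch x) (Stretch y).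
Proof.
  intros Hxy. destruct (classic (separated x y)) as [[r [Hx Hy]] | Hsep].
  - apply (U_mp2 _ _ _ (Stretch_below x r Hx) (Stretch_above y r Hy)). intros n. lra.
  - unfold Stretch, perturb. rewrite (st_not_separated x y Hxy Hsep).
    apply ltH_cl, (U_mp _ _ Hxy). intros n. apply stretch_increasing.
Qed.

Lemma Stretch_lt_iff x y : ltH x y <-> ltH (Stretch x) (Stretch y).
Proof.
  split; [apply Stretch_lt |]. intros H.
  destruct (ltH_total x y) as [| [<- | Hyx]]; auto; exfalso.
  - exact (ltH_irrefl _ H).
  - apply (ltH_irrefl (Stretch x)), (ltH_trans _ _ _ H), Stretch_lt, Hyx.
Qed.

Lemma Stretch_inj x y : Stretch x = Stretch y -> x = y.
Proof.
  intros H. destruct (ltH_total x y) as [Hlt | [| Hlt]]; auto; exfalso;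
    apply Stretch_lt in Hlt; rewrite H in Hlt; exact (ltH_irrefl _ Hlt).
Qed.

Definition twisted_op (o : R -> R -> R) (x y : hyperreal) : hyperreal :=
  Shrink (op2 o (Stretch x) (Stretch y)).

Definition twisted : structure :=
  Structure hyperreal (embed 0) (embed 1) (op2 Rplus) (op2 Rminus) (twisted_op Rmult)
    (twisted_op rdiv0) ltH scale.

Lemma teval_twisted_add F v t : term_add F t -> teval ultrapower v t = teval twisted v t.
Proof.
  induction t; simpl; intros Ht; try tauto; f_equal; tauto.
Qed.

Lemma teval_twisted_mult F v t : term_mult F t ->
  teval ultrapower (fun k => Stretch (v k)) t = Stretch (teval twisted v t).
Proof.
  induction t; simpl; intros Ht; try tauto.
  - symmetry. apply Stretch_embed.
  - symmetry. apply Stretch_embed.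
  - rewrite IHt1, IHt2 by tauto. unfold twisted_op. symmetry. apply Stretch_Shrink.
  - rewrite IHt1, IHt2 by tauto. unfold twisted_op. symmetry. apply Stretch_Shrink.
  - rewrite IHt by tauto. symmetry. apply Stretch_scale.
Qed.

Lemma twisted_model F q : in_T F q -> forall v, sat twisted v q.
Proof.
  intros [_ [Htrue [Hadd | Hmul]]] v.
  - apply (sat_transport twisted ultrapower (fun x => x) (term_add F)); auto.
    + intros y. exists y. reflexivity.
    + reflexivity.
    + intros. apply (teval_twisted_add F); auto.
    + apply ultrapower_true, Htrue.
  - apply (sat_transport twisted ultrapower Stretch (term_mult F)); auto.
    + apply Stretch_inj.
    + intros y. exists (Shrink y). apply Stretch_Shrink.
    + apply Stretch_lt_iff.
    + intros. apply (teval_twisted_mult F); auto.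
    + apply ultrapower_true, Htrue.
Qed.

Lemma twisted_counterexample eps v : 0 <= eps -> ~ sat twisted v (target eps).
Proof.
  (* [1 + delta] sits at the kink of [stretch 1 _ delta], so [Stretch] fixes it, but its square
     lies beyond the kink. *)
  intros Heps H. simpl in H. specialize (H (cl (fun n => 1 + delta n))).
  unfold upd in H. simpl in H.
  assert (Hfix : Stretch (cl (fun n => 1 + delta n)) = cl (fun n => 1 + delta n)).
  { unfold Stretch. rewrite (perturb_cl _ _ 1).
    - apply cl_ext. intros n. pose proof (delta_pos n).
      unfold stretch. rewrite excess_inner; [ring | nra | nra].
    - apply st_spec, (ulim_eqU _ _ _ (eqU_sym _ _ (val_cl _))), ulim_one_plus_delta. }
  assert (Hsq : twisted_op Rmult (cl (fun n => 1 + delta n)) (cl (fun n => 1 + delta n))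
                = cl (fun n => shrink 1 ((1 + delta n) * (1 + delta n)) (delta n))).
  { unfold twisted_op, Shrink. rewrite Hfix, op2_cl. apply perturb_cl.
    apply st_spec, (ulim_eqU _ _ _ (eqU_sym _ _ (val_cl _))), ulim_square_one_plus_delta. }
  rewrite Hsq in H. unfold embed in H. rewrite !scale_cl, !op2_cl in H.
  assert (Hbelow : U (fun n =>
    shrink 1 ((1 + delta n) * (1 + delta n)) (delta n) - 2 * (1 + delta n) + 1 < 0)).
  { apply (U_mp _ _ (uf_tail U HU 1)). intros n Hn.
    apply shrink_square_below. split; [apply delta_pos | apply delta_lt_one, Hn]. }
  destruct H as [H | H]; [apply (proj1 (ltH_cl _ _)) in H | apply (proj1 (cl_eq _ _)) in H];
    apply (U_contra _ (uf_and U HU _ _ H Hbelow)); intros n []; lra.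
Qed.

End Ultrapower.

Lemma not_proves_target_nonneg F eps : 0 <= eps -> ~ proves F (target eps).
Proof.
  intros Heps Hp. destruct NatUltrafilter.exists_nonprincipal as [U HU].
  apply (twisted_counterexample U HU eps (fun _ => embed U HU 0) Heps).
  apply Hp. intros q Hq. apply (twisted_model U HU F q Hq).
Qed.

Theorem theorem5p2 (F : R -> Prop) (HF : is_subfield F) :
  (forall eps : R, F eps -> (proves F (target eps) <-> eps < 0)) /\
  ~ proves F (target 0).
Proof.
  split.
  - intros eps Feps. split.
    + intros Hp. destruct (Rlt_or_le eps 0) as [| Hle]; auto.
      exfalso. exact (not_proves_target_nonneg F eps Hle Hp).
    + apply proves_target_neg; auto.
  - apply not_proves_target_nonneg. lra.
Qed.
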